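(* Let $m,n,p,q$ be arbitrary integers and define $$P(x_1,x_2,x_3,x_4)=\begin{bmatrix}x_1 & x_2 & x_3 & x_4\\ -nx_2 & x_1+mx_2 & -nx_4 & x_3+mx_4\\ -qx_3 & -qx_4 & x_1+px_3 & x_2+px_4\\ qnx_4 & -q(x_3+mx_4) & -nx_2-pnx_4 & x_1+mx_2+p(x_3+mx_4)\end{bmatrix}.$$ Then for independent variables $x_i,y_i$, $P(x_1,\dots,x_4)P(y_1,\dots,y_4)=P(z_1,\dots,z_4)$, where $z_1=x_1y_1-nx_2y_2-qx_3y_3+qnx_4y_4$, $z_2=x_1y_2+x_2y_1+mx_2y_2-qx_3y_4-qx_4y_3-mqx_4y_4$, $z_3=x_1y_3-nx_2y_4+x_3y_1+px_3y_3-nx_4y_2-npx_4y_4$, $z_4=x_1y_4+x_2y_3+mx_2y_4+x_3y_2+px_3y_4+x_4y_1+mx_4y_2+px_4y_3+mpx_4y_4$. Consequently the quaternary quartic form $f(x_1,\dots,x_4)=\det P(x_1,\dots,x_4)$ satisfies $f(x_1,\dots,x_4)f(y_1,\dots,y_4)=f(z_1,\dots,z_4)$. *)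

From HB Require Import structures.
From mathcomp Require Import all_boot all_order all_algebra.
Set Implicit Arguments. Unset Strict Implicit. Unset Printing Implicit Defensive.
Import Order.TTheory GRing.Theory Num.Theory.
Local Open Scope ring_scope.

Definition Pmat (R : comNzRingType) (m n p q : int) (x1 x2 x3 x4 : R) : 'M[R]_4 :=
  let m' := (m%:~R : R) in let n' := (n%:~R : R) in
  let p' := (p%:~R : R) in let q' := (q%:~R : R) in
  \matrix_(i < 4, j < 4)
    nth 0 (nth [::] [:: [:: x1; x2; x3; x4];
        [:: - n' * x2; x1 + m' * x2; - n' * x4; x3 + m' * x4];
        [:: - q' * x3; - q' * x4; x1 + p' * x3; x2 + p' * x4];
        [:: q' * n' * x4; - q' * (x3 + m' * x4); - n' * x2 - p' * n' * x4;
            x1 + m' * x2 + p' * (x3 + m' * x4)] ] i) j.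

Definition fquart (R : comNzRingType) (m n p q : int) (x1 x2 x3 x4 : R) : R :=
  \det (Pmat m n p q x1 x2 x3 x4).

From HB Require Import structures.
From mathcomp Require Import all_boot all_order all_algebra.
From mathcomp Require Import ring.
Set Implicit Arguments. Unset Strict Implicit. Unset Printing Implicit Defensive.
Import Order.TTheory GRing.Theory Num.Theory.
Local Open Scope ring_scope.

(* A quadruple x = (x1,x2,x3,x4) over R stands for the
   element x1 + x2 a + x3 b + x4 ab of the rank-4 algebra
     A = R[a,b] / (a^2 - m a + n, b^2 - p b + q),
   and the formulas for (z1,...,z4) in the theorem are exactly the
   coordinates of the product xy in the basis (1, a, b, ab).  The matrix
   P(x) is the (right) regular representation of A: its i-th row holds the
   coordinates of e_i x, where e_i is the i-th basis element.  Hence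
     row_i (P(x) P(y)) = (e_i x) y = e_i (x y) = row_i (P(xy)),
   using only that v P(y) = v y for every row vector v and the
   associativity of the product of A.  The statement about the quartic form
   f = det P then follows from multiplicativity of the determinant. *)

Section RegularRepresentation.

Variable R : comNzRingType.
Variables m n p q : int.

Let m' : R := m%:~R.
Let n' : R := n%:~R.
Let p' : R := p%:~R.
Let q' : R := q%:~R.

Record quad := Quad { c1 : R; c2 : R; c3 : R; c4 : R }.

(* The multiplication of A, using a^2 = m a - n and b^2 = p b - q. *)
Definition qmul (x y : quad) : quad :=
  Quad (c1 x * c1 y - n' * c2 x * c2 y - q' * c3 x * c3 y
          + q' * n' * c4 x * c4 y)
       (c1 x * c2 y + c2 x * c1 y + m' * c2 x * c2 y - q' * c3 x * c4 y
          - q' * c4 x * c3 y - m' * q' * c4 x * c4 y)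
       (c1 x * c3 y - n' * c2 x * c4 y + c3 x * c1 y + p' * c3 x * c3 y
          - n' * c4 x * c2 y - n' * p' * c4 x * c4 y)
       (c1 x * c4 y + c2 x * c3 y + m' * c2 x * c4 y + c3 x * c2 y
          + p' * c3 x * c4 y + c4 x * c1 y + m' * c4 x * c2 y
          + p' * c4 x * c3 y + m' * p' * c4 x * c4 y).

(* A is associative: the product is that of a tensor product of two
   quadratic algebras; here it is a routine polynomial identity. *)
Lemma qmulA : associative qmul.
Proof.
move=> [x1 x2 x3 x4] [y1 y2 y3 y4] [z1 z2 z3 z4].
by rewrite /qmul /=; congr Quad; ring.
Qed.

Definition qvec (x : quad) : 'rV[R]_4 :=
  \row_j nth 0 [:: c1 x; c2 x; c3 x; c4 x] j.

Definition qbasis (i : 'I_4) : quad :=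
  nth (Quad 1 0 0 0)
      [:: Quad 1 0 0 0; Quad 0 1 0 0; Quad 0 0 1 0; Quad 0 0 0 1] i.

Definition qmat (x : quad) : 'M[R]_4 := Pmat m n p q (c1 x) (c2 x) (c3 x) (c4 x).

Lemma row_qmat (x : quad) (i : 'I_4) : row i (qmat x) = qvec (qmul (qbasis i) x).
Proof.
case: x => x1 x2 x3 x4; apply/rowP => j; rewrite !mxE.
by case: i => [[|[|[|[|i]]]] Hi] //=; case: j => [[|[|[|[|j]]]] Hj] //=;
  rewrite /m' /n' /p' /q'; ring.
Qed.

(* Right multiplication by P(y) on coordinate vectors is multiplication
   by y in A (linearity of the product in its left argument). *)
Lemma qvec_mulmx (v y : quad) : qvec v *m qmat y = qvec (qmul v y).
Proof.
case: v y => v1 v2 v3 v4 [y1 y2 y3 y4]; apply/rowP => j.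
rewrite !mxE !big_ord_recr big_ord0 /= !mxE /=.
by case: j => [[|[|[|[|j]]]] Hj] //=; rewrite /m' /n' /p' /q'; ring.
Qed.

Lemma qmat_mul (x y : quad) : qmat x *m qmat y = qmat (qmul x y).
Proof.
apply/row_matrixP => i.
by rewrite row_mul !row_qmat qvec_mulmx qmulA.
Qed.

Lemma fquart_mul (x y : quad) :
  fquart m n p q (c1 x) (c2 x) (c3 x) (c4 x) *
  fquart m n p q (c1 y) (c2 y) (c3 y) (c4 y) =
  fquart m n p q (c1 (qmul x y)) (c2 (qmul x y)) (c3 (qmul x y)) (c4 (qmul x y)).
Proof. by rewrite /fquart -det_mulmx; apply: congr1 (qmat_mul x y). Qed.

End RegularRepresentation.

Theorem mainTheorem3 (R : comNzRingType) (m n p q : int)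
    (x1 x2 x3 x4 y1 y2 y3 y4 : R) :
  let m' := (m%:~R : R) in let n' := (n%:~R : R) in
  let p' := (p%:~R : R) in let q' := (q%:~R : R) in
  let z1 := x1 * y1 - n' * x2 * y2 - q' * x3 * y3 + q' * n' * x4 * y4 in
  let z2 := x1 * y2 + x2 * y1 + m' * x2 * y2 - q' * x3 * y4 - q' * x4 * y3
            - m' * q' * x4 * y4 in
  let z3 := x1 * y3 - n' * x2 * y4 + x3 * y1 + p' * x3 * y3 - n' * x4 * y2
            - n' * p' * x4 * y4 in
  let z4 := x1 * y4 + x2 * y3 + m' * x2 * y4 + x3 * y2 + p' * x3 * y4
            + x4 * y1 + m' * x4 * y2 + p' * x4 * y3 + m' * p' * x4 * y4 in
  Pmat m n p q x1 x2 x3 x4 *m Pmat m n p q y1 y2 y3 y4 = Pmat m n p q z1 z2 z3 z4 /\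
  fquart m n p q x1 x2 x3 x4 * fquart m n p q y1 y2 y3 y4 = fquart m n p q z1 z2 z3 z4.
Proof.
move=> m' n' p' q' z1 z2 z3 z4; split.
- exact (qmat_mul m n p q (Quad x1 x2 x3 x4) (Quad y1 y2 y3 y4)).
- exact (fquart_mul m n p q (Quad x1 x2 x3 x4) (Quad y1 y2 y3 y4)).
Qed.
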